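(* Let $\lambda>0$, let $\Theta$ be a set (of market scenarios), and let $\eta:\mathbb{R}^n\times\Theta\to\mathbb{R}$, $\xi:\mathbb{R}^n\times\Theta\to\mathbb{R}^n$ be given. For $\alpha\in\mathbb{R}^n$, $\theta\in\Theta$ and a function $\psi(t,x)$ of class $C^{1,2}$ define $$\mathcal{L}^{\alpha,\theta}\psi(t,x)=\psi_t(t,x)+\eta(\alpha,\theta)\psi_x(t,x)+\tfrac12\|\xi(\alpha,\theta)\|_2^2\,\psi_{xx}(t,x),\qquad \mathcal{H}^{\alpha,\theta}\psi(t,x)=\|\xi(\alpha,\theta)\|_2^2\,\psi_x^2(t,x).$$ Let $\hat\alpha(t,x)\in\mathbb{R}^n$ and $\hat\theta(t,x)\in\Theta$ be given (feedback) functions. Consider System (I) for $(V,g)$: $$\sup_{\alpha\in\mathbb{R}^n}\inf_{\theta\in\Theta}\{\mathcal{L}^{\alpha,\theta}V(t,x)-\lambda\mathcal{H}^{\alpha,\theta}g(t,x)\}=\mathcal{L}^{\hat\alpha,\hat\theta}V(t,x)-\lambda\mathcal{H}^{\hat\alpha,\hat\theta}g(t,x)=0,\quad \mathcal{L}^{\hat\alpha,\hat\theta}g(t,x)=0,\quad V(T,x)=x,\quad g(T,x)=x,$$ and System (II) for $(f,g)$: $$\sup_{\alpha\in\mathbb{R}^n}\inf_{\theta\in\Theta}\{\mathcal{L}^{\alpha,\theta}f(t,x)+2\lambda g(t,x)\mathcal{L}^{\alpha,\theta}g(t,x)\}=\mathcal{L}^{\hat\alpha,\hat\theta}f(t,x)+2\lambda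 g(t,x)\mathcal{L}^{\hat\alpha,\hat\theta}g(t,x)=0,$$ $$\mathcal{L}^{\hat\alpha,\hat\theta}f(t,x)=0,\quad \mathcal{L}^{\hat\alpha,\hat\theta}g(t,x)=0,\quad f(T,x)=x-\lambda x^2,\quad g(T,x)=x.$$ Then: (1) if $(V,g)$ is a solution of System (I) with $V,g\in C^{1,2}$ in $(t,x)$, then $(f,g)$ with $f:=V-\lambda g^2$ is a solution of System (II); (2) if $(f,g)$ is a solution of System (II) with $f,g\in C^{1,2}$ in $(t,x)$, then $(V,g)$ with $V:=f+\lambda g^2$ is a solution of System (I).
   Context: These PDE systems arise from the robust dynamic mean-variance problem with wealth dynamics $dX_s=\eta(\alpha_s,\theta_s)ds+\xi(\alpha_s,\theta_s)\cdot d\mathcal{B}_s$ on $[t,T]$ and objective $E_t[X_T]-\lambda\,\mathrm{Var}_t(X_T)$; $\hat\alpha$ is a candidate equilibrium strategy and $\hat\theta$ the corresponding worst-case scenario. *)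

From Stdlib Require Import Reals.
From Stdlib Require Fin.
From Coquelicot Require Import Coquelicot.
Open Scope R_scope.

Definition vec (n : nat) := Fin.t n -> R.

Fixpoint sqnorm {n : nat} : vec n -> R :=
  match n return vec n -> R with
  | O => fun _ => 0
  | S m => fun v => (v Fin.F1) ^ 2 + sqnorm (fun i : Fin.t m => v (Fin.FS i))
  end.

Definition d_t (psi : R -> R -> R) (t x : R) : R := Derive (fun s => psi s x) t.
Definition d_x (psi : R -> R -> R) (t x : R) : R := Derive (fun y => psi t y) x.
Definition d_xx (psi : R -> R -> R) (t x : R) : R := Derive (fun y => d_x psi t y) x.

Definition C12 (psi : R -> R -> R) : Prop :=
  forall t x : R,
    ex_derive (fun s => psi s x) t /\
    ex_derive (fun y => psi t y) x /\
    ex_derive (fun y => d_x psi t y) x /\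
    continuous (fun p : R * R => psi (fst p) (snd p)) (t, x) /\
    continuous (fun p : R * R => d_t psi (fst p) (snd p)) (t, x) /\
    continuous (fun p : R * R => d_x psi (fst p) (snd p)) (t, x) /\
    continuous (fun p : R * R => d_xx psi (fst p) (snd p)) (t, x).

Definition Lgen {n : nat} {Theta : Type}
  (eta : vec n -> Theta -> R) (xi : vec n -> Theta -> vec n)
  (a : vec n) (th : Theta) (psi : R -> R -> R) (t x : R) : R :=
  d_t psi t x + eta a th * d_x psi t x + / 2 * sqnorm (xi a th) * d_xx psi t x.

Definition Hgen {n : nat} {Theta : Type}
  (xi : vec n -> Theta -> vec n)
  (a : vec n) (th : Theta) (psi : R -> R -> R) (t x : R) : R :=
  sqnorm (xi a th) * (d_x psi t x) ^ 2.

Definition supinf {n : nat} {Theta : Type} (F : vec n -> Theta -> R) : Rbar :=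
  Rbar_lub (fun r => exists a : vec n,
    r = Rbar_glb (fun s => exists th : Theta, s = Finite (F a th))).

Definition SystemI {n : nat} {Theta : Type}
  (eta : vec n -> Theta -> R) (xi : vec n -> Theta -> vec n) (lam T : R)
  (ah : R -> R -> vec n) (thh : R -> R -> Theta) (V g : R -> R -> R) : Prop :=
  (forall t x : R, 0 <= t < T ->
     supinf (fun a th => Lgen eta xi a th V t x - lam * Hgen xi a th g t x)
       = Finite (Lgen eta xi (ah t x) (thh t x) V t x
                 - lam * Hgen xi (ah t x) (thh t x) g t x) /\
     Lgen eta xi (ah t x) (thh t x) V t x
       - lam * Hgen xi (ah t x) (thh t x) g t x = 0 /\
     Lgen eta xi (ah t x) (thh t x) g t x = 0) /\
  (forall x : R, V T x = x /\ g T x = x).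

Definition SystemII {n : nat} {Theta : Type}
  (eta : vec n -> Theta -> R) (xi : vec n -> Theta -> vec n) (lam T : R)
  (ah : R -> R -> vec n) (thh : R -> R -> Theta) (f g : R -> R -> R) : Prop :=
  (forall t x : R, 0 <= t < T ->
     supinf (fun a th => Lgen eta xi a th f t x
                         + 2 * lam * g t x * Lgen eta xi a th g t x)
       = Finite (Lgen eta xi (ah t x) (thh t x) f t x
                 + 2 * lam * g t x * Lgen eta xi (ah t x) (thh t x) g t x) /\
     Lgen eta xi (ah t x) (thh t x) f t x
       + 2 * lam * g t x * Lgen eta xi (ah t x) (thh t x) g t x = 0 /\
     Lgen eta xi (ah t x) (thh t x) f t x = 0 /\
     Lgen eta xi (ah t x) (thh t x) g t x = 0) /\
  (forall x : R, f T x = x - lam * x ^ 2 /\ g T x = x).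

(* The chain rule gives, for psi + c phi^2, the Ito-type identity
   L(psi + c phi^2) = L psi + c (2 phi L phi + H phi).
   With c = -lambda this turns the Hamiltonian L V - lambda H g of System (I)
   into the Hamiltonian L f + 2 lambda g L g of System (II), pointwise in
   (alpha, theta); so the two sup-inf problems, their optimisers and their
   optimal values coincide, and with L g = 0 along the optimiser also L f = 0.
   The terminal conditions correspond because g(T, x) = x. *)

From Stdlib Require Import Reals Lra FunctionalExtensionality.
From Coquelicot Require Import Coquelicot.
Open Scope R_scope.

Section AddSquare.

Variables (psi phi : R -> R -> R) (c : R).

Let F (t x : R) : R := psi t x + c * phi t x ^ 2.

Lemma is_derive_add_scal_sqr (u v : R -> R) (y du dv : R) :
  is_derive u y du -> is_derive v y dv ->
  is_derive (fun z => u z + c * v z ^ 2) y (du + c * (2 * v y * dv)).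
Proof.
  intros Hu Hv.
  apply (is_derive_plus u); [exact Hu |].
  replace (c * (2 * v y * dv)) with (c * (INR 2 * dv * v y ^ Nat.pred 2))
    by (simpl; ring).
  apply (is_derive_scal (fun z => v z ^ 2)), is_derive_pow, Hv.
Qed.

Lemma d_t_add_sqr (t x : R) :
  ex_derive (fun s => psi s x) t -> ex_derive (fun s => phi s x) t ->
  d_t F t x = d_t psi t x + c * (2 * phi t x * d_t phi t x).
Proof.
  intros Hpsi Hphi.
  apply is_derive_unique,
    (is_derive_add_scal_sqr (fun s => psi s x) (fun s => phi s x));
    apply Derive_correct; assumption.
Qed.

Lemma d_x_add_sqr (t x : R) :
  ex_derive (fun y => psi t y) x -> ex_derive (fun y => phi t y) x ->
  d_x F t x = d_x psi t x + c * (2 * phi t x * d_x phi t x).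
Proof.
  intros Hpsi Hphi.
  apply is_derive_unique,
    (is_derive_add_scal_sqr (fun y => psi t y) (fun y => phi t y));
    apply Derive_correct; assumption.
Qed.

Lemma d_xx_add_sqr (t x : R) :
  (forall y, ex_derive (fun z => psi t z) y) ->
  (forall y, ex_derive (fun z => phi t z) y) ->
  ex_derive (fun y => d_x psi t y) x -> ex_derive (fun y => d_x phi t y) x ->
  d_xx F t x
  = d_xx psi t x + c * (2 * d_x phi t x ^ 2 + 2 * phi t x * d_xx phi t x).
Proof.
  intros Hpsi Hphi Hpsi' Hphi'.
  unfold d_xx.
  rewrite (Derive_ext _ (fun y => d_x psi t y + c * (2 * phi t y * d_x phi t y)))
    by (intro y; apply d_x_add_sqr; auto).
  apply is_derive_unique, (is_derive_plus (fun y => d_x psi t y));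
    [apply Derive_correct; exact Hpsi' |].
  apply (is_derive_scal (fun y => 2 * phi t y * d_x phi t y)).
  replace (2 * d_x phi t x ^ 2 + 2 * phi t x * Derive (fun y => d_x phi t y) x)
    with (2 * d_x phi t x * d_x phi t x
          + 2 * phi t x * Derive (fun y => d_x phi t y) x) by ring.
  apply (is_derive_mult (fun y => 2 * phi t y) (fun y => d_x phi t y)).
  - apply (is_derive_scal (fun y => phi t y)), Derive_correct, Hphi.
  - apply Derive_correct, Hphi'.
  - intros; apply Rmult_comm.
Qed.

Lemma Lgen_add_sqr {n : nat} {Theta : Type}
  (eta : vec n -> Theta -> R) (xi : vec n -> Theta -> vec n)
  (a : vec n) (th : Theta) (t x : R) :
  C12 psi -> C12 phi ->
  Lgen eta xi a th F t x
  = Lgen eta xi a th psi t x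
    + c * (2 * phi t x * Lgen eta xi a th phi t x + Hgen xi a th phi t x).
Proof.
  intros Hpsi Hphi.
  unfold Lgen, Hgen.
  destruct (Hpsi t x) as [Hpsi_t [Hpsi_x [Hpsi_xx _]]].
  destruct (Hphi t x) as [Hphi_t [Hphi_x [Hphi_xx _]]].
  rewrite (d_t_add_sqr t x Hpsi_t Hphi_t), (d_x_add_sqr t x Hpsi_x Hphi_x),
    (d_xx_add_sqr t x (fun y => proj1 (proj2 (Hpsi t y)))
       (fun y => proj1 (proj2 (Hphi t y))) Hpsi_xx Hphi_xx).
  field.
Qed.

End AddSquare.

Lemma supinf_ext {n : nat} {Theta : Type} (F G : vec n -> Theta -> R) :
  (forall a th, F a th = G a th) -> supinf F = supinf G.
Proof.
  intro HFG.
  f_equal.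
  apply functional_extensionality; intro a.
  apply functional_extensionality; intro th.
  apply HFG.
Qed.

Section Correspondence.

Context {n : nat} {Theta : Type}
  (eta : vec n -> Theta -> R) (xi : vec n -> Theta -> vec n)
  (lam T : R) (ah : R -> R -> vec n) (thh : R -> R -> Theta).

Lemma SystemI_SystemII (V g : R -> R -> R) :
  C12 V -> C12 g -> SystemI eta xi lam T ah thh V g ->
  SystemII eta xi lam T ah thh (fun t x => V t x - lam * g t x ^ 2) g.
Proof.
  intros HV Hg [Hpde Hterm].
  assert (Hham : forall a th t x,
    Lgen eta xi a th (fun t x => V t x - lam * g t x ^ 2) t x
      + 2 * lam * g t x * Lgen eta xi a th g t x
    = Lgen eta xi a th V t x - lam * Hgen xi a th g t x).
  { intros a th t x.
    replace (fun t x => V t x - lam * g t x ^ 2)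
      with (fun t x => V t x + - lam * g t x ^ 2)
      by (do 2 (apply functional_extensionality; intro); ring).
    rewrite Lgen_add_sqr by assumption.
    ring. }
  split.
  - intros t x Ht.
    destruct (Hpde t x Ht) as [Hsup [Hval Hg0]].
    rewrite (supinf_ext _ _ (fun a th => Hham a th t x)), !Hham.
    repeat split; try assumption.
    specialize (Hham (ah t x) (thh t x) t x).
    rewrite Hg0 in Hham; lra.
  - intro x.
    destruct (Hterm x) as [HVT HgT].
    rewrite HVT, HgT; split; reflexivity.
Qed.

Lemma SystemII_SystemI (f g : R -> R -> R) :
  C12 f -> C12 g -> SystemII eta xi lam T ah thh f g ->
  SystemI eta xi lam T ah thh (fun t x => f t x + lam * g t x ^ 2) g.
Proof.
  intros Hf Hg [Hpde Hterm].
  assert (Hham : forall a th t x,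
    Lgen eta xi a th (fun t x => f t x + lam * g t x ^ 2) t x
      - lam * Hgen xi a th g t x
    = Lgen eta xi a th f t x + 2 * lam * g t x * Lgen eta xi a th g t x).
  { intros a th t x.
    rewrite Lgen_add_sqr by assumption.
    ring. }
  split.
  - intros t x Ht.
    destruct (Hpde t x Ht) as [Hsup [Hval [_ Hg0]]].
    rewrite (supinf_ext _ _ (fun a th => Hham a th t x)), !Hham.
    repeat split; assumption.
  - intro x.
    destruct (Hterm x) as [HfT HgT].
    rewrite HfT, HgT; split; [ring | reflexivity].
Qed.

End Correspondence.

Theorem proposition1 (n : nat) (Theta : Type)
  (eta : vec n -> Theta -> R) (xi : vec n -> Theta -> vec n)
  (lam T : R) (ah : R -> R -> vec n) (thh : R -> R -> Theta) :
  0 < lam ->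
  (forall V g : R -> R -> R, C12 V -> C12 g ->
     SystemI eta xi lam T ah thh V g ->
     SystemII eta xi lam T ah thh (fun t x => V t x - lam * (g t x) ^ 2) g) /\
  (forall f g : R -> R -> R, C12 f -> C12 g ->
     SystemII eta xi lam T ah thh f g ->
     SystemI eta xi lam T ah thh (fun t x => f t x + lam * (g t x) ^ 2) g).
Proof.
  intros _.
  split; [apply SystemI_SystemII | apply SystemII_SystemI].
Qed.
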